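(* Fix any input (any fixed initial content of the tape). The set of programs whose computation on this input falls off the tape before reaching the halt state and before repeating a state has asymptotic probability one.
   Context: Model of computation: a single head reads and writes symbols $0,1$ on a one-way infinite tape with cells indexed $0,1,2,\dots$; the head starts on cell $0$. An $n$-state program has states $Q=\{q_1,\dots,q_n\}$, with $q_1$ the start state, plus a separate halt state not in $Q$. A program is a function $p: Q\times\{0,1\}\to (Q\cup\{\mathrm{halt}\})\times\{0,1\}\times\{L,R\}$; $p(q,i)=\langle r,j,d\rangle$ means: in state $q$ reading $i$, write $j$, move one cell in direction $d$, enter state $r$. The computation stops when the halt state is reached (''halting'') or when the head attempts to move left from cell $0$ (''falls off the tape''); in the latter case the target state of that transition is not regarded as reached. The computation ''repeats a state'' if some state occurs twice in the sequence of states $q_1=s_0,s_1,\dots$ reached at successive steps. Let $P_n$ be the set of all $n$-state programs; the asymptotic probability of a set $B$ of programs is $\mu(B)=\lim_{n\to\infty}|B\cap P_n|/|P_n|$, when this limit exists. *)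

From HB Require Import structures.
From mathcomp Require Import all_boot all_order all_algebra.
From mathcomp Require Import all_classical all_reals all_analysis.
Set Implicit Arguments. Unset Strict Implicit. Unset Printing Implicit Defensive.
Import Order.TTheory GRing.Theory Num.Theory.

(* Programs with n.+1 states q_1..q_{n+1}, represented by 'I_n.+1
   (ord0 is the start state q_1).  A transition value (r, j, d):
   r : option 'I_n.+1  (None = halt state), j : bool (symbol written,
   true = 1), d : bool (direction: true = R, false = L). *)
Definition prog (n : nat) :=
  {ffun 'I_n.+1 * bool -> option 'I_n.+1 * bool * bool}.

Definition tape := nat -> bool.

Definition config (n : nat) := ('I_n.+1 * nat * tape)%type.

Inductive outcome (n : nat) :=
| Halted
| Fell
| Cont of config n.

Definition step (n : nat) (p : prog n) (c : config n) : outcome n :=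
  let: (q, h, t) := c in
  let: (r, j, d) := p (q, t h) in
  let t' : tape := fun i => if i == h then j else t i in
  if (~~ d) && (h == 0)%N then Fell n
  else match r with
       | None => Halted n
       | Some r' => Cont (r', (if d then h.+1 else h.-1), t')
       end.

Fixpoint run (n : nat) (p : prog n) (x : tape) (k : nat) : option (config n) :=
  match k with
  | 0 => Some (ord0, 0%N, x)
  | k'.+1 =>
      match run p x k' with
      | Some c => match step p c with
                  | Cont c' => Some c'
                  | _ => None
                  end
      | None => None
      end
  end.

Definition falls_off_fresh (n : nat) (p : prog n) (x : tape) : Prop :=
  exists k c, run p x k = Some c /\ step p c = Fell n /\
    (forall i j ci cj, (i <= k)%N -> (j <= k)%N ->
       run p x i = Some ci -> run p x j = Some cj ->
       ci.1.1 = cj.1.1 -> i = j).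

(* While the states visited so far are pairwise distinct, the transition about to be
   executed is read for the first time, so over all programs it is uniformly distributed
   and independent of the computation so far ([sum_value_at_key]).  Hence at step t the
   run ends by halting or by repeating a state with probability at most (t+2)/(n+2), and
   otherwise the head moves right or left with probability 1/2 each: it performs a simple
   symmetric random walk from cell 0, killed when it leaves the tape.  Such a walk dies
   almost surely: h+1 is harmonic, so the surviving mass beyond cell M is at most 1/(M+1),
   and a concave potential shows that the expected time spent below M is at most 4M.
   Taking T steps with T large compared to M, and then n large compared to T^2, the
   programs that do not fall off the tape freshly become a vanishing fraction. *)

From HB Require Import structures.
From mathcomp Require Import all_boot all_order all_algebra.
From mathcomp Require Import all_classical all_reals all_analysis.
From mathcomp Require Import zify.
Import Order.TTheory GRing.Theory Num.Theory.
Import numFieldNormedType.Exports.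
Set Implicit Arguments. Unset Strict Implicit.

Definition neighbour_sum (g : nat -> nat) (h : nat) : nat :=
  g h.+1 + (if h is h'.+1 then g h' else 0).

(* h (2M - h) has second difference -2 below M; the additive 2M pays for the mass that
   is killed at cell 0. *)
Definition concave_potential (M h : nat) : nat :=
  let k := minn h M in 2 * M + k * (2 * M - k).

Lemma concave_potential_superharmonic M h :
  neighbour_sum (concave_potential M) h + (h < M) <= 2 * concave_potential M h.
Proof.
have minl a : a <= M -> minn a M = a by move/minn_idPl.
have minr a : M <= a -> minn a M = M by move/minn_idPr.
rewrite /neighbour_sum /concave_potential /=.
case: h => [|h] /=.
  by case: (posnP M) => [->|M0]; rewrite ?minl //; lia.
case: (ltngtP h.+1 M) => [lt|gt|eq].
- by rewrite !minl; try lia; nia.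
- by rewrite !minr //; lia.
- rewrite -{}eq (minn_idPr (leqnSn _)) (minn_idPl (leqnSn h)); nia.
Qed.

Section WalkSurvival.
Variables (I : finType) (alive : nat -> pred I) (pos : nat -> I -> nat).

Definition walk_weight t (g : nat -> nat) : nat := \sum_(i | alive t i) g (pos t i).

Hypothesis pos0 : forall i, pos 0 i = 0.
(* Half of the surviving mass moves right and half moves left; a left move from cell 0
   is lost. *)
Hypothesis walk_step : forall t g,
  2 * walk_weight t.+1 g <= walk_weight t (neighbour_sum g).

Lemma walk_weight0 g : walk_weight 0 g <= #|I| * g 0.
Proof.
rewrite /walk_weight (eq_bigr (fun=> g 0)) => [|i _]; last by rewrite pos0.
by rewrite sum_nat_const leq_mul2r max_card orbT.
Qed.

Lemma potential_bound (f c : nat -> nat) T :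
  (forall h, neighbour_sum f h + c h <= 2 * f h) ->
  \sum_(t < T) walk_weight t c + 2 * walk_weight T f <= 2 * #|I| * f 0.
Proof.
move=> super; elim: T => [|T IH]; first by rewrite big_ord0 -mulnA leq_mul2l walk_weight0.
apply: leq_trans IH; rewrite big_ord_recr /= -addnA leq_add2l.
apply: leq_trans (leq_add (leqnn _) (walk_step T f)) _.
rewrite addnC /walk_weight -big_split big_distrr /=.
by apply: leq_sum => i _; exact: super.
Qed.

Lemma walk_weight_succ T : walk_weight T succn <= #|I|.
Proof.
have super h : neighbour_sum succn h + 0 <= 2 * h.+1.
  by case: h => [|h]; rewrite /neighbour_sum; lia.
have := potential_bound T super; lia.
Qed.

Lemma walk_weight_low_sum M T :
  \sum_(t < T) walk_weight t (fun h => h < M) <= 4 * M * #|I|.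
Proof.
have := potential_bound T (concave_potential_superharmonic M).
rewrite /concave_potential /= min0n; lia.
Qed.

Lemma walk_survival M T :
  T * M.+1 * walk_weight T (fun=> 1) <= (4 * M * M.+1 + T) * #|I|.
Proof.
have decr t : walk_weight t.+1 (fun=> 1) <= walk_weight t (fun=> 1).
  rewrite -(leq_pmul2l (isT : 0 < 2)); apply: leq_trans (walk_step t _) _.
  rewrite /walk_weight big_distrr /=; apply: leq_sum => i _.
  by rewrite /neighbour_sum; case: (pos t i).
have markov t : M.+1 * walk_weight t (fun=> 1) <=
    M.+1 * walk_weight t (fun h => h < M) + walk_weight t succn.
  rewrite /walk_weight !big_distrr -big_split /=; apply: leq_sum => i _.
  by case: ltnP; lia.
have mono t : t <= T -> walk_weight T (fun=> 1) <= walk_weight t (fun=> 1).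
  move/subnK <-; elim: (T - t) => // k IH; exact: leq_trans (decr _) IH.
apply: (@leq_trans (\sum_(t < T) M.+1 * walk_weight t (fun=> 1))).
  rewrite -mulnA -[X in X * _](card_ord T) -sum_nat_const.
  by apply: leq_sum => t _; rewrite leq_mul2l mono ?orbT // ltnW.
apply: leq_trans; first by apply: leq_sum => t _; exact: markov.
rewrite big_split /= -big_distrr /= mulnDl; apply: leq_add.
  apply: leq_trans (leq_mul (leqnn M.+1) (walk_weight_low_sum M T)) _.
  by rewrite mulnC -!mulnA (mulnC #|I|).
apply: (@leq_trans (\sum_(t < T) #|I|)); last by rewrite sum_nat_const card_ord.
by apply: leq_sum => t _; exact: walk_weight_succ.
Qed.
End WalkSurvival.

Definition ffun_set (A : finType) (B : Type) (f : {ffun A -> B}) (a : A) (v : B) :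
  {ffun A -> B} := [ffun b => if b == a then v else f b].

Lemma ffun_setE (A : finType) (B : Type) (f : {ffun A -> B}) a v b :
  ffun_set f a v b = if b == a then v else f b.
Proof. by rewrite ffunE. Qed.

Section ValueAtFreshKey.
Variables (A B : finType) (Q : pred {ffun A -> B}) (k : {ffun A -> B} -> A).
Hypothesis Q_set : forall f v, Q f -> Q (ffun_set f (k f) v).
Hypothesis k_set : forall f v, Q f -> k (ffun_set f (k f) v) = k f.

Definition swap_at_key (fv : {ffun A -> B} * B) : {ffun A -> B} * B :=
  let: (f, v) := fv in if Q f then (ffun_set f (k f) v, f (k f)) else fv.

Lemma swap_at_keyK : involutive swap_at_key.
Proof.
case=> f v /=; case Qf: (Q f); rewrite /= ?Qf // Q_set // k_set // ffun_setE eqxx.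
by congr (_, _); apply/ffunP => a; rewrite !ffun_setE; case: eqP => // ->.
Qed.

Lemma sum_value_at_key (F : {ffun A -> B} -> B -> nat) :
  (forall f v w, Q f -> F (ffun_set f (k f) v) w = F f w) ->
  #|B| * \sum_(f | Q f) F f (f (k f)) = \sum_(f | Q f) \sum_v F f v.
Proof.
move=> F_set; pose G (fv : {ffun A -> B} * B) := F fv.1 fv.2.
transitivity (\sum_(f | Q f) \sum_v G (swap_at_key (f, v))).
  rewrite big_distrr; apply: eq_bigr => f Qf.
  rewrite (eq_bigr (fun=> F f (f (k f)))) ?sum_nat_const // => v _.
  by rewrite /= Qf /G /= F_set.
rewrite !pair_big_dep [RHS](reindex_inj (inv_inj swap_at_keyK)) /=.
by apply: eq_big => -[f v] /=; case Qf: (Q f); rewrite /= ?Q_set ?Qf.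
Qed.
End ValueAtFreshKey.

Lemma sum_pair_fst (A B : finType) (f : A -> nat) :
  \sum_(u : A * B) f u.1 = #|B| * \sum_a f a.
Proof.
rewrite -(pair_bigA _ (fun a _ => f a)) big_distrr /=.
by apply: eq_bigr => a _; rewrite sum_nat_const.
Qed.

Lemma sum_pair_snd (A B : finType) (f : B -> nat) :
  \sum_(u : A * B) f u.2 = #|A| * \sum_b f b.
Proof. by rewrite -(pair_bigA _ (fun _ b => f b)) /= sum_nat_const. Qed.

Definition config_key (n : nat) (c : config n) : 'I_n.+1 * bool := (c.1.1, c.2 c.1.2).

Lemma step_eq (n : nat) (p p' : prog n) c :
  p' (config_key c) = p (config_key c) -> step p' c = step p c.
Proof. by case: c => [[q h] t]; rewrite /step /config_key /= => ->. Qed.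

Lemma step_Halted_target (n : nat) (p : prog n) c :
  step p c = Halted n -> (p (config_key c)).1.1 = None.
Proof.
case: c => [[q h] t]; rewrite /step /config_key /=.
by case: (p (q, t h)) => [[[r|] j] d] //=; case: ifP.
Qed.

Lemma step_Cont_target (n : nat) (p : prog n) c c' :
  step p c = Cont c' -> (p (config_key c)).1.1 = Some c'.1.1.
Proof.
case: c => [[q h] t]; rewrite /step /config_key /=.
by case: (p (q, t h)) => [[[r|] j] d] //=; case: ifP => // _ [<-].
Qed.

Section Programs.
Variables (n : nat) (x : tape).
Implicit Types (p : prog n) (t : nat).
Local Notation transition := (option 'I_n.+1 * bool * bool)%type.

Definition state t p : 'I_n.+1 := if run p x t is Some c then c.1.1 else ord0.
Definition head t p : nat := if run p x t is Some c then c.1.2 else 0.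
Definition key t p : 'I_n.+1 * bool :=
  if run p x t is Some c then config_key c else (ord0, false).
Definition visited t p : seq 'I_n.+1 := [seq state i p | i <- iota 0 t.+1].
Definition alive t p : bool := (run p x t != None) && uniq (visited t p).

(* Entering one of these ends a fresh run without falling off the tape. *)
Definition stale_targets t p : seq (option 'I_n.+1) :=
  None :: map Some (visited t p).

Definition stale_move t p : bool := alive t p && ((p (key t p)).1.1 \in stale_targets t p).

Definition stale_count t : nat :=
  \sum_(p | alive t p) ((p (key t p)).1.1 \in stale_targets t p).

Lemma run_stopped_mono p i j : i <= j -> run p x i = None -> run p x j = None.
Proof. by move/subnK <-; elim: (j - i) => //= k IH /IH ->. Qed.

Lemma alive_run t p i : alive t p -> i <= t -> exists c, run p x i = Some c.
Proof.
case/andP=> running _ le_it; case E: (run p x i) => [c|]; first by exists c.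
by rewrite (run_stopped_mono le_it E) in running.
Qed.

Lemma alive_state_inj t p i j :
  alive t p -> i <= t -> j <= t -> state i p = state j p -> i = j.
Proof.
case/andP=> _ /uniqP-/(_ ord0) inj le_it le_jt eq_ij; apply/eqP.
have := inj i j; rewrite !inE size_map size_iota !ltnS le_it le_jt.
rewrite !(nth_map 0) ?size_iota ?ltnS // !nth_iota ?ltnS // => /(_ isT isT eq_ij).
by move->.
Qed.

Lemma alive_pred t p : alive t.+1 p -> alive t p.
Proof.
case/andP=> running; rewrite /visited -[t.+2]addn1 iotaD map_cat cat_uniq => /andP[uniq_t _].
by apply/andP; split=> //; apply: contra_neq running => /= ->.
Qed.

Section UpdateAtKey.
Variables (t : nat) (p : prog n) (v : transition).
Hypothesis alive_p : alive t p.
Local Notation p' := (ffun_set p (key t p) v).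

(* The entry at [key t p] is not read before step [t], since [state t p] is fresh. *)
Lemma run_set i : i <= t -> run p' x i = run p x i.
Proof.
elim: i => [|i IH] le_it //=; rewrite IH ?(ltnW le_it) //.
have [c run_i] := alive_run alive_p (ltnW le_it); rewrite run_i (@step_eq _ p) // ffun_setE.
case: eqP => // key_eq; have [ct run_t] := alive_run alive_p (leqnn t).
move: key_eq; rewrite /key run_t => -[state_eq _].
have := @alive_state_inj _ _ i t alive_p (ltnW le_it) (leqnn t).
by rewrite /state run_i run_t => /(_ state_eq) eq_it; rewrite eq_it ltnn in le_it.
Qed.

Lemma state_set i : i <= t -> state i p' = state i p.
Proof. by move=> le_it; rewrite /state run_set. Qed.

Lemma head_set : head t p' = head t p.
Proof. by rewrite /head run_set. Qed.

Lemma key_set : key t p' = key t p.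
Proof. by rewrite /key run_set. Qed.

Lemma visited_set : visited t p' = visited t p.
Proof. by apply/eq_in_map => i; rewrite mem_iota ltnS => /andP[_]; exact: state_set. Qed.

Lemma stale_targets_set : stale_targets t p' = stale_targets t p.
Proof. by rewrite /stale_targets visited_set. Qed.

Lemma alive_set : alive t p'.
Proof.
by case/andP: alive_p => running uniq_t; rewrite /alive run_set // running visited_set.
Qed.
End UpdateAtKey.

Lemma head_succ t p : alive t.+1 p ->
  if (p (key t p)).2 then head t.+1 p = (head t p).+1
  else head t p = (head t.+1 p).+1.
Proof.
move=> alive1; have [c run_t] := alive_run (alive_pred alive1) (leqnn t).
have [c' run_t1] := alive_run alive1 (leqnn _); move: run_t1.
rewrite /head /key /= run_t; case: c {run_t} => [[q h] tape_c].
rewrite /step /config_key /=; case: (p (q, tape_c h)) => [[r j] []] /=.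
  by case: r.
by case: eqP => // h_neq0; case: r => // r _ /=; rewrite prednK // lt0n; apply/eqP.
Qed.

Lemma walk_step_prog t (g : nat -> nat) :
  2 * walk_weight alive head t.+1 g <= walk_weight alive head t (neighbour_sum g).
Proof.
pose G p (v : transition) :=
  if v.2 then g (head t p).+1 else if head t p is h.+1 then g h else 0.
have le_G : walk_weight alive head t.+1 g <= \sum_(p | alive t p) G p (p (key t p)).
  rewrite /walk_weight big_mkcond [X in _ <= X]big_mkcond; apply: leq_sum => p _.
  case: ifP => // alive1; rewrite (alive_pred alive1).
  by have := head_succ alive1; rewrite /G; case: (p (key t p)).2 => ->.
have G_set p v w : alive t p -> G (ffun_set p (key t p) v) w = G p w.
  by move=> alive_p; rewrite /G head_set.
have := sum_value_at_key (@alive_set t) (@key_set t) G_set.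
pose c := #|{: option 'I_n.+1 * bool}|.
rewrite [X in _ = X -> _](eq_bigr (fun p => c * neighbour_sum g (head t p))).
  rewrite -big_distrr card_prod card_bool -mulnA => sum_G.
  have c_gt0 : 0 < c by apply/card_gt0P; exists (None, false).
  by rewrite -(leq_pmul2l c_gt0) -sum_G !leq_mul2l le_G !orbT.
by move=> p _; rewrite (@sum_pair_snd _ _ (fun d => G p (None, false, d))) big_bool.
Qed.

Lemma stale_count_le t : n.+2 * stale_count t <= t.+2 * #|{: prog n}|.
Proof.
have F_set p v (w : transition) : alive t p ->
    (w.1.1 \in stale_targets t (ffun_set p (key t p) v) : nat) = (w.1.1 \in stale_targets t p).
  by move=> alive_p; rewrite stale_targets_set.
have card_V : #|{: transition}| = 4 * n.+2.
  by rewrite !card_prod card_option card_ord card_bool; lia.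
have stale_v p : \sum_(v : transition) (v.1.1 \in stale_targets t p) <= 4 * t.+2.
  rewrite (@sum_pair_fst _ _ (fun u => u.1 \in stale_targets t p)).
  rewrite (@sum_pair_fst _ _ (fun r => r \in stale_targets t p)) card_bool mulnA leq_mul2l /=.
  rewrite -big_mkcond /= sum1_card (leq_trans (card_size _)) //.
  by rewrite /= size_map size_map size_iota.
rewrite -(leq_pmul2l (isT : 0 < 4)) mulnA -card_V /stale_count.
rewrite (sum_value_at_key (@alive_set t) (@key_set t) F_set).
apply: (@leq_trans (\sum_(p | alive t p) 4 * t.+2)); first exact: leq_sum.
rewrite sum_nat_const; apply: leq_trans (leq_mul (max_card _) (leqnn _)) _.
by rewrite mulnC -mulnA.
Qed.

Lemma visited_succ t p : visited t.+1 p = rcons (visited t p) (state t.+1 p).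
Proof. by rewrite /visited -[t.+2]addn1 iotaD map_cat cats1. Qed.

Lemma alive_succ_cases t p : alive t p ->
  [\/ exists c, run p x t = Some c /\ step p c = Fell n, stale_move t p | alive t.+1 p].
Proof.
move=> alive_t; have [c run_t] := alive_run alive_t (leqnn t).
have key_t : key t p = config_key c by rewrite /key run_t.
rewrite /stale_move alive_t key_t /=; case E: (step p c) => [||c'].
- by apply: Or32; rewrite (step_Halted_target E).
- by apply: Or31; exists c.
have run_t1 : run p x t.+1 = Some c' by rewrite /= run_t E.
have state_t1 : c'.1.1 = state t.+1 p by rewrite /state run_t1.
rewrite (step_Cont_target E) state_t1 /stale_targets in_cons (mem_map Some_inj) orFb.
case: (boolP (state t.+1 p \in visited t p)) => [_|fresh]; first exact: Or32.
apply: Or33; case/andP: alive_t => _ uniq_t.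
by rewrite /alive run_t1 visited_succ rcons_uniq fresh.
Qed.

Lemma not_falls_off_fresh_cases p T : ~ falls_off_fresh p x ->
  alive T p \/ exists2 t, t < T & stale_move t p.
Proof.
move=> not_falls; elim: T => [|T [alive_T|[t lt_tT stale_t]]]; first by left.
- case: (alive_succ_cases alive_T) => [[c [run_T fell]]|stale_T|]; last by left.
    case: not_falls; exists T, c; split=> [//|]; split=> // i j ci cj le_iT le_jT run_i run_j eq_ij.
    by apply: (alive_state_inj alive_T) => //; rewrite /state run_i run_j.
  by right; exists T.
- by right; exists t => //; exact: ltnW.
Qed.

Lemma card_not_falls_off_le T :
  #|~: [set p : prog n | `[< falls_off_fresh p x >]]|
  <= walk_weight alive head T (fun=> 1) + \sum_(t < T) stale_count t.
Proof.
rewrite -sum1_card /walk_weight /stale_count [X in X <= _]big_mkcond [X in _ <= X + _]big_mkcond.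
under [X in _ <= _ + X]eq_bigr do rewrite big_mkcond.
rewrite exchange_big -big_split /=; apply: leq_sum => p _; rewrite !inE.
case: asboolP => //= not_falls.
case: (not_falls_off_fresh_cases T not_falls) => [-> //|[t lt_tT]].
case/andP=> alive_t stale_t; rewrite (bigD1 (Ordinal lt_tT)) //= alive_t stale_t.
by rewrite addnCA leq_addr.
Qed.
End Programs.

(* With M = K and T = 4K(K+1), [walk_survival] bounds the surviving mass by 2/K. *)
Lemma card_not_falls_off_small (n K : nat) (x : tape) : 0 < K ->
  let T := 4 * K * K.+1 in K * (T * T.+1) <= n.+2 ->
  K * #|~: [set p : prog n | `[< falls_off_fresh p x >]]| <= 3 * #|{: prog n}|.
Proof.
move=> K_gt0 T n_large; have T_gt0 : 0 < T by rewrite /T !muln_gt0 K_gt0.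
apply: leq_trans (leq_mul (leqnn K) (@card_not_falls_off_le n x T)) _.
set A := walk_weight _ _ _ _; set S := \sum_(t < T) _.
have A_le : K * A <= 2 * #|{: prog n}|.
  have := walk_survival (fun p => erefl : head x 0 p = 0) (@walk_step_prog n x) K T.
  rewrite -/T -/A -mulnA addnn -mul2n -mulnA (mulnCA 2) leq_pmul2l // => surv.
  exact: leq_trans (leq_mul (leqnSn K) (leqnn A)) surv.
have S_le : K * S <= #|{: prog n}|.
  have stale : n.+2 * S <= T * T.+1 * #|{: prog n}|.
    rewrite /S big_distrr /=.
    apply: (@leq_trans (\sum_(t < T) T.+1 * #|{: prog n}|)).
      apply: leq_sum => t _; apply: leq_trans (@stale_count_le n x t) _.
      by rewrite leq_mul2r ltnS ltn_ord orbT.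
    by rewrite sum_nat_const card_ord mulnA.
  have TT_gt0 : 0 < T * T.+1 by rewrite muln_gt0 T_gt0.
  rewrite -(leq_pmul2l TT_gt0); apply: leq_trans stale.
  by rewrite mulnCA mulnA leq_mul2r n_large orbT.
by rewrite mulnDr (leq_trans (leq_add A_le S_le)) //; lia.
Qed.

Local Open Scope classical_set_scope.
Local Open Scope ring_scope.

Lemma dist_one_ratio_le (R : realType) (a b c N K : nat) :
  (a + b = N)%N -> (0 < N)%N -> (0 < K)%N -> (K * b <= c * N)%N ->
  `|1 - a%:R / N%:R| <= c%:R / K%:R :> R.
Proof.
move=> <- N_gt0 K_gt0 bK; have N_neq0 : ((a + b)%:R : R) != 0 by rewrite pnatr_eq0 -lt0n.
have -> : 1 - a%:R / (a + b)%:R = b%:R / (a + b)%:R :> R.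
  by apply: (mulIf N_neq0); rewrite mulrBl !divfK // mul1r natrD addrAC subrr add0r.
rewrite ger0_norm ?divr_ge0 // ler_pdivrMr ?ltr0n // mulrAC ler_pdivlMr ?ltr0n //.
by rewrite -!natrM ler_nat mulnC.
Qed.

Theorem mainTheorem6 (R : realType) (x : nat -> bool) :
  (fun n : nat =>
     (#|[set p : prog n | `[< falls_off_fresh p x >] ]%SET|%:R
        / #|{: prog n}|%:R : R)) @ \oo --> (1 : R).
Proof.
apply/cvgrPdist_le => e e_gt0.
have bound_ge0 : 0 <= 3 / e :> R by rewrite divr_ge0 // ltW.
have := archi_boundP bound_ge0; set K := Num.Def.archi_bound _ => K_large.
have K_gt0 : (0 < K)%N by rewrite -(ltr0n R); apply: le_lt_trans K_large.
have K_ge : 3%:R / K%:R <= e :> R.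
  by rewrite ler_pdivrMr ?ltr0n // mulrC -ler_pdivrMr // ltW.
near=> n; apply: le_trans K_ge; apply: dist_one_ratio_le => //.
- exact: cardsC.
- by apply/card_gt0P; exists [ffun=> (None, false, false)].
apply: card_not_falls_off_small => //; apply: leqW; apply: leqW.
by near: n; exact: nbhs_infty_ge.
Unshelve. all: by end_near.
Qed.
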